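(* Let $\Omega$ be a finite sample space and let $P\neq Q$ be two probability distributions on $\Omega$. For every $\lambda\in(0,1)$, $$L(\lambda)\,H^2(P,Q)\le \mathrm{GJS}_\lambda(P\parallel Q)\le U(\lambda)\,H^2(P,Q)\le H^2(P,Q).$$ In particular, for $\lambda=1/2$, $\ln 2\le \mathrm{JS}(P\parallel Q)/H^2(P,Q)\le 1$.
   Context: $\mathrm{KL}(P\parallel Q)=\sum_{i:P(i)>0}P(i)\ln\frac{P(i)}{Q(i)}$. For $\lambda\in[0,1]$ and $M_\lambda=\lambda P+(1-\lambda)Q$, $\mathrm{GJS}_\lambda(P\parallel Q)=\lambda\,\mathrm{KL}(P\parallel M_\lambda)+(1-\lambda)\,\mathrm{KL}(Q\parallel M_\lambda)$, and $\mathrm{JS}=\mathrm{GJS}_{1/2}$. The squared Hellinger distance is $H^2(P,Q)=\frac12\sum_{i\in\Omega}(\sqrt{P(i)}-\sqrt{Q(i)})^2$. With $\eta(\lambda)=-\lambda\ln\lambda$, $L(\lambda)=2\min\{\eta(\lambda),\eta(1-\lambda)\}$ and $U(\lambda)=\frac{2\lambda(1-\lambda)}{1-2\lambda}\ln\frac{1-\lambda}{\lambda}$ for $\lambda\neq1/2$, $U(1/2)=1$. *)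

From Stdlib Require Import Reals Lra List.
Import ListNotations.
Open Scope R_scope.

(* Finite sample space Omega = {0, ..., n-1}; distributions are functions nat -> R
   of which only the values on indices i < n matter. *)
Definition sumR (n : nat) (f : nat -> R) : R :=
  fold_right Rplus 0 (map f (seq 0 n)).

Definition is_distribution (n : nat) (P : nat -> R) : Prop :=
  (forall i, (i < n)%nat -> 0 <= P i) /\ sumR n P = 1.

Definition KL (n : nat) (P Q : nat -> R) : R :=
  sumR n (fun i => if Rlt_dec 0 (P i) then P i * ln (P i / Q i) else 0).

Definition mixture (lam : R) (P Q : nat -> R) : nat -> R :=
  fun i => lam * P i + (1 - lam) * Q i.

Definition GJS (n : nat) (lam : R) (P Q : nat -> R) : R :=
  lam * KL n P (mixture lam P Q) + (1 - lam) * KL n Q (mixture lam P Q).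

Definition JS (n : nat) (P Q : nat -> R) : R := GJS n (1/2) P Q.

Definition Hellinger2 (n : nat) (P Q : nat -> R) : R :=
  (1/2) * sumR n (fun i => (sqrt (P i) - sqrt (Q i)) ^ 2).

Definition eta (lam : R) : R := - lam * ln lam.

Definition Lb (lam : R) : R := 2 * Rmin (eta lam) (eta (1 - lam)).

Definition Ub (lam : R) : R :=
  if Req_EM_T lam (1/2) then 1
  else (2 * lam * (1 - lam)) / (1 - 2 * lam) * ln ((1 - lam) / lam).

(* Both GJS_l and H^2 are sums over the sample space of pointwise terms in (x, y) =
   (P(i), Q(i)), homogeneous of degree one; so it suffices to compare the terms.  For
   y = 0 the GJS term is eta(l) x and the Hellinger term x/2.  For x, y > 0, writing
   x = y t^2 turns the comparison into one between the kernel
   g(t) = 2 l t^2 ln t - m ln m, m = l t^2 + 1 - l, and (t-1)^2/2.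

   Lower bound (t >= 1, the case t < 1 follows by swapping P, Q and l, 1-l): both sides
   and their first derivatives agree at t = 1, and the second derivative of the
   difference is 2 l (ln w + 2 - 2 l w) - L(l) with w = t^2/m in [1, 1/l], which is
   at least min(4 l (1-l), 2 eta(l)) - L(l) >= 0.

   Upper bound (l <= 1/2): the difference U(l) (t-1)^2/2 - g(t) vanishes at t = 1 and at
   t = (1-l)/l (this is what the formula for U(l) encodes); outside these points it is
   monotone, and inside it cannot become negative because the sign changes of its
   derivative are governed by a convex quadratic.  Finally U(l) <= 1 and
   4 l (1-l), 2 eta(l) <= U(l) are elementary logarithm inequalities. *)
From Stdlib Require Import Reals Lra List Lia.
From Coquelicot Require Import Coquelicot.
Open Scope R_scope.

Lemma ln_le_sub_1 u : 0 < u -> ln u <= u - 1.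
Proof. intro Hu. generalize (exp_ineq1_le (ln u)). rewrite exp_ln; lra. Qed.

Lemma one_sub_inv_le_ln u : 0 < u -> 1 - / u <= ln u.
Proof.
  intro Hu. generalize (ln_le_sub_1 (/ u) (Rinv_0_lt_compat _ Hu)).
  rewrite ln_Rinv; lra.
Qed.

Lemma MVT_deriv_neg f f' a b : a < b ->
  (forall c, a <= c <= b -> derivable_pt_lim f c (f' c)) ->
  f b < f a -> exists c, a < c < b /\ f' c < 0.
Proof.
  intros Hab Hd Hlt. destruct (MVT_cor2 f f' a b Hab Hd) as [c [Hc Hin]].
  exists c; split; [exact Hin | nra].
Qed.

Lemma MVT_deriv_pos f f' a b : a < b ->
  (forall c, a <= c <= b -> derivable_pt_lim f c (f' c)) ->
  f a < f b -> exists c, a < c < b /\ 0 < f' c.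
Proof.
  intros Hab Hd Hlt. destruct (MVT_cor2 f f' a b Hab Hd) as [c [Hc Hin]].
  exists c; split; [exact Hin | nra].
Qed.

Lemma nondecreasing_of_deriv_nonneg f f' a b : a <= b ->
  (forall c, a <= c <= b -> derivable_pt_lim f c (f' c)) ->
  (forall c, a < c < b -> 0 <= f' c) -> f a <= f b.
Proof.
  intros Hab Hd Hpos. destruct (Rle_lt_dec (f a) (f b)) as [|Hlt]; [assumption|].
  destruct (Req_dec a b) as [->|Hne]; [lra|].
  destruct (MVT_deriv_neg f f' a b) as [c [Hc Hneg]]; try assumption; [lra|].
  specialize (Hpos c Hc); lra.
Qed.

Lemma nonincreasing_of_deriv_nonpos f f' a b : a <= b ->
  (forall c, a <= c <= b -> derivable_pt_lim f c (f' c)) ->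
  (forall c, a < c < b -> f' c <= 0) -> f b <= f a.
Proof.
  intros Hab Hd Hneg. destruct (Rle_lt_dec (f b) (f a)) as [|Hlt]; [assumption|].
  destruct (Req_dec a b) as [->|Hne]; [lra|].
  destruct (MVT_deriv_pos f f' a b) as [c [Hc Hpos]]; try assumption; [lra|].
  specialize (Hneg c Hc); lra.
Qed.

Lemma ln_ge_2_sub_div_add x : 1 <= x -> 2 * (x - 1) / (x + 1) <= ln x.
Proof.
  intro Hx. set (f := fun x => ln x - 2 * (x - 1) / (x + 1)).
  enough (f 1 <= f x) by (unfold f in *; rewrite ln_1 in *; lra).
  apply (nondecreasing_of_deriv_nonneg f (fun x => / x - 4 / (x + 1) ^ 2)); auto.
  - intros c Hc. apply is_derive_Reals. unfold f. auto_derive.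
    + repeat split; lra.
    + field. lra.
  - intros c Hc.
    replace (/ c - 4 / (c + 1) ^ 2) with ((c - 1) ^ 2 / (c * (c + 1) ^ 2)) by (field; lra).
    apply Rdiv_le_0_compat; nra.
Qed.

Lemma ln_le_half_sub_inv x : 1 <= x -> ln x <= (x - / x) / 2.
Proof.
  intro Hx. set (f := fun x => (x - / x) / 2 - ln x).
  enough (f 1 <= f x) by (unfold f in *; rewrite ln_1, Rinv_1 in *; lra).
  apply (nondecreasing_of_deriv_nonneg f (fun x => (1 + / x ^ 2) / 2 - / x)); auto.
  - intros c Hc. apply is_derive_Reals. unfold f. auto_derive.
    + repeat split; lra.
    + field. lra.
  - intros c Hc.
    replace ((1 + / c ^ 2) / 2 - / c) with ((c - 1) ^ 2 / (2 * c ^ 2)) by (field; lra).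
    apply Rdiv_le_0_compat; nra.
Qed.

Lemma sub_1_mul_ln_add_1_le x : 1 <= x -> (x - 1) * ln (1 + x) <= x * ln x.
Proof.
  intro Hx. set (f := fun x => x * ln x - (x - 1) * ln (1 + x)).
  enough (f 1 <= f x) by (unfold f in *; rewrite ln_1 in *; lra).
  apply (nondecreasing_of_deriv_nonneg f
           (fun x => ln x + 1 - ln (1 + x) - (x - 1) / (1 + x))); auto.
  - intros c Hc. apply is_derive_Reals. unfold f. auto_derive.
    + repeat split; lra.
    + field. lra.
  - intros c Hc.
    generalize (one_sub_inv_le_ln (c / (1 + c)) ltac:(apply Rdiv_lt_0_compat; lra)).
    rewrite ln_div by lra.
    replace (/ (c / (1 + c))) with ((1 + c) / c) by (field; lra).
    intro Hln. assert (0 <= (c - 1) / (c * (1 + c))) by (apply Rdiv_le_0_compat; nra).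
    assert (1 - (1 + c) / c + 1 - (c - 1) / (1 + c) = (c - 1) / (c * (1 + c)))
      by (field; lra).
    lra.
Qed.

Lemma eta_le_1_sub l : 0 < l -> eta l <= 1 - l.
Proof.
  intro Hl. unfold eta. generalize (one_sub_inv_le_ln l Hl). intro Hln.
  assert (l * (1 - / l) = l - 1) by (field; lra). nra.
Qed.

Lemma Lb_le_eta l : Lb l <= 2 * eta l.
Proof. unfold Lb. generalize (Rmin_l (eta l) (eta (1 - l))). lra. Qed.

Lemma Lb_le_eta_1_sub l : Lb l <= 2 * eta (1 - l).
Proof. unfold Lb. generalize (Rmin_r (eta l) (eta (1 - l))). lra. Qed.

Lemma Lb_le_4_mul l : 0 < l < 1 -> Lb l <= 4 * l * (1 - l).
Proof.
  intro Hl. destruct (Rle_dec l (1/2)).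
  - generalize (Lb_le_eta_1_sub l) (eta_le_1_sub (1 - l) ltac:(lra)). nra.
  - generalize (Lb_le_eta l) (eta_le_1_sub l ltac:(lra)). nra.
Qed.

Lemma Lb_1_sub l : Lb (1 - l) = Lb l.
Proof. unfold Lb. replace (1 - (1 - l)) with l by ring. rewrite Rmin_comm. ring. Qed.

Lemma Lb_half : Lb (1/2) = ln 2.
Proof.
  unfold Lb, eta. replace (1 - 1/2) with (1/2) by field. rewrite Rmin_left by lra.
  rewrite ln_div, ln_1 by lra. field.
Qed.

Lemma Ub_half : Ub (1/2) = 1.
Proof. unfold Ub. destruct (Req_EM_T (1/2) (1/2)); [reflexivity | contradiction]. Qed.

Lemma Ub_neq_half l : l <> 1/2 ->
  Ub l = 2 * l * (1 - l) / (1 - 2 * l) * ln ((1 - l) / l).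
Proof. intro Hl. unfold Ub. destruct (Req_EM_T l (1/2)); [contradiction | reflexivity]. Qed.

Lemma Ub_1_sub l : 0 < l < 1 -> Ub (1 - l) = Ub l.
Proof.
  intro Hl. destruct (Req_dec l (1/2)) as [->|Hne].
  { replace (1 - 1/2) with (1/2) by field. reflexivity. }
  rewrite !Ub_neq_half by lra. replace (1 - (1 - l)) with l by ring.
  replace (l / (1 - l)) with (/ ((1 - l) / l)) by (field; lra).
  rewrite ln_Rinv by (apply Rdiv_lt_0_compat; lra).
  field. lra.
Qed.

Lemma Ub_mul_1_sub_2 l : 0 < l < 1 ->
  Ub l * (1 - 2 * l) = 2 * l * (1 - l) * ln ((1 - l) / l).
Proof.
  intro Hl. destruct (Req_dec l (1/2)) as [->|Hne].
  - replace ((1 - 1/2) / (1/2)) with 1 by field. rewrite ln_1. field.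
  - rewrite Ub_neq_half by lra. field. lra.
Qed.

(* For [l < 1/2], with [rho = (1-l)/l > 1] one has [Ub l = 2 rho ln rho / (rho^2 - 1)],
   and the three bounds below are the three logarithm inequalities above at [rho]. *)

Lemma Ub_ge_4_mul_half l : 0 < l <= 1/2 -> 4 * l * (1 - l) <= Ub l.
Proof.
  intro Hl. destruct (Req_dec l (1/2)) as [->|Hne]; [rewrite Ub_half; lra|].
  rewrite Ub_neq_half by lra. set (rho := (1 - l) / l).
  assert (Hrho : 1 <= rho) by (unfold rho; apply Rcomplements.Rle_div_r; lra).
  generalize (ln_ge_2_sub_div_add rho Hrho).
  replace (2 * (rho - 1) / (rho + 1)) with (2 * (1 - 2 * l)) by (unfold rho; field; lra).
  intro Hln. assert (0 < 2 * l * (1 - l) / (1 - 2 * l)) by (apply Rdiv_lt_0_compat; nra).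
  replace (4 * l * (1 - l)) with (2 * l * (1 - l) / (1 - 2 * l) * (2 * (1 - 2 * l)))
    by (field; lra).
  apply Rmult_le_compat_l; lra.
Qed.

Lemma Ub_ge_4_mul l : 0 < l < 1 -> 4 * l * (1 - l) <= Ub l.
Proof.
  intro Hl. destruct (Rle_dec l (1/2)); [apply Ub_ge_4_mul_half; lra|].
  rewrite <- Ub_1_sub by lra. replace (4 * l * (1 - l)) with (4 * (1 - l) * (1 - (1 - l)))
    by ring.
  apply Ub_ge_4_mul_half; lra.
Qed.

Lemma Ub_le_1_half l : 0 < l <= 1/2 -> Ub l <= 1.
Proof.
  intro Hl. destruct (Req_dec l (1/2)) as [->|Hne]; [rewrite Ub_half; lra|].
  rewrite Ub_neq_half by lra. set (rho := (1 - l) / l).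
  assert (Hrho : 1 <= rho) by (unfold rho; apply Rcomplements.Rle_div_r; lra).
  generalize (ln_le_half_sub_inv rho Hrho).
  replace ((rho - / rho) / 2) with ((1 - 2 * l) / (2 * l * (1 - l))) by (unfold rho; field; lra).
  intro Hln. assert (0 < 2 * l * (1 - l) / (1 - 2 * l)) by (apply Rdiv_lt_0_compat; nra).
  apply Rle_trans with (2 * l * (1 - l) / (1 - 2 * l) * ((1 - 2 * l) / (2 * l * (1 - l)))).
  - apply Rmult_le_compat_l; lra.
  - right. field. repeat split; lra.
Qed.

Lemma Ub_le_1 l : 0 < l < 1 -> Ub l <= 1.
Proof.
  intro Hl. destruct (Rle_dec l (1/2)); [apply Ub_le_1_half; lra|].
  rewrite <- Ub_1_sub by lra. apply Ub_le_1_half; lra.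
Qed.

Lemma eta_le_Ub l : 0 < l < 1 -> 2 * eta l <= Ub l.
Proof.
  intro Hl. destruct (Rle_dec l (1/2)) as [Hhalf|Hhalf].
  2: { generalize (eta_le_1_sub l ltac:(lra)) (Ub_ge_4_mul l Hl). nra. }
  destruct (Req_dec l (1/2)) as [->|Hne].
  { generalize (eta_le_1_sub (1/2) ltac:(lra)). rewrite Ub_half. lra. }
  rewrite Ub_neq_half by lra. set (rho := (1 - l) / l).
  assert (Hrho : 1 <= rho) by (unfold rho; apply Rcomplements.Rle_div_r; lra).
  generalize (sub_1_mul_ln_add_1_le rho Hrho).
  replace (1 + rho) with (/ l) by (unfold rho; field; lra).
  rewrite ln_Rinv by lra.
  replace (rho - 1) with ((1 - 2 * l) / l) by (unfold rho; field; lra).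
  change (rho * ln rho) with ((1 - l) / l * ln rho).
  intro Hln. unfold eta.
  assert (H2 : (1 - 2 * l) * - ln l <= (1 - l) * ln rho).
  { apply (Rmult_le_reg_r (/ l)); [apply Rinv_0_lt_compat; lra|].
    replace ((1 - 2 * l) * - ln l * / l) with ((1 - 2 * l) / l * - ln l) by (field; lra).
    replace ((1 - l) * ln rho * / l) with ((1 - l) / l * ln rho) by (field; lra).
    exact Hln. }
  apply (Rmult_le_reg_r (1 - 2 * l)); [lra|].
  replace (2 * l * (1 - l) / (1 - 2 * l) * ln rho * (1 - 2 * l))
    with (2 * l * ((1 - l) * ln rho)) by (field; lra).
  nra.
Qed.

(* With [x = y t^2] and [m = l x + (1-l) y = y (l t^2 + 1 - l)], the pointwise GJS term
   [l x ln (x/m) + (1-l) y ln (y/m)] equals [y * gjs_kernel l t]. *)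
Definition gjs_kernel (l t : R) : R :=
  2 * l * t ^ 2 * ln t - (l * t ^ 2 + 1 - l) * ln (l * t ^ 2 + 1 - l).

Lemma gjs_kernel_1 l : gjs_kernel l 1 = 0.
Proof. unfold gjs_kernel. replace (l * 1 ^ 2 + 1 - l) with 1 by ring. rewrite ln_1. ring. Qed.

Lemma gjs_kernel_derive l t : 0 < l < 1 -> 0 < t ->
  derivable_pt_lim (gjs_kernel l) t
    (4 * l * t * ln t - 2 * l * t * ln (l * t ^ 2 + 1 - l)).
Proof.
  intros Hl Ht. apply is_derive_Reals. unfold gjs_kernel. auto_derive.
  - repeat split; try lra. nra.
  - assert (0 < l * t ^ 2 + 1 - l) by nra.
    replace (l * (t * (t * 1)) + 1 + - l) with (l * t ^ 2 + 1 - l) by ring.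
    field. lra.
Qed.

(* At the two ends [w = 1] and [l w = 1] the right-hand side is [4 l (1-l)] and [2 eta l]. *)
Lemma Lb_le_curvature l w : 0 < l < 1 -> 1 <= w -> l * w <= 1 ->
  Lb l <= 2 * l * (ln w + 2 - 2 * l * w).
Proof.
  intros Hl Hw1 Hw2. destruct (Rle_dec (2 * l * w) 1).
  - generalize (one_sub_inv_le_ln w ltac:(lra)) (Lb_le_4_mul l Hl). intros Hln HLb.
    assert (Hiw : w * / w = 1) by (field; lra).
    assert (0 <= (w - 1) * (/ w - 2 * l)).
    { apply Rmult_le_pos; [lra|].
      assert (/ w * (2 * l * w) <= / w * 1).
      { apply Rmult_le_compat_l; [left; apply Rinv_0_lt_compat|]; lra. }
      nra. }
    nra.
  - assert (Hu : 0 < l * w) by nra.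
    assert (Hlnu : ln (l * w) = ln l + ln w) by (rewrite ln_mult; lra).
    generalize (one_sub_inv_le_ln (l * w) Hu) (Lb_le_eta l). intros Hln HLb.
    assert (Hiw : (l * w) * / (l * w) = 1) by (field; lra).
    assert (0 <= (1 - l * w) * (2 - / (l * w))).
    { apply Rmult_le_pos; [lra|].
      assert (/ (l * w) * 1 <= / (l * w) * (2 * (l * w))).
      { apply Rmult_le_compat_l; [left; apply Rinv_0_lt_compat|]; lra. }
      nra. }
    unfold eta in HLb. nra.
Qed.

Lemma Lb_le_gjs_kernel_second_deriv l t : 0 < l < 1 -> 1 <= t ->
  Lb l <= 4 * l * ln t + 4 * l - 2 * l * ln (l * t ^ 2 + 1 - l)
          - 4 * l ^ 2 * t ^ 2 / (l * t ^ 2 + 1 - l).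
Proof.
  intros Hl Ht. set (m := l * t ^ 2 + 1 - l).
  assert (Hm : 0 < m) by (unfold m; nra).
  assert (Hmt : m <= t ^ 2).
  { unfold m. assert (0 <= (1 - l) * (t ^ 2 - 1)) by (apply Rmult_le_pos; nra). lra. }
  set (w := t ^ 2 / m).
  assert (Hw1 : 1 <= w) by (unfold w; apply Rcomplements.Rle_div_r; lra).
  assert (Hw2 : l * w <= 1).
  { unfold w. replace (l * (t ^ 2 / m)) with (l * t ^ 2 / m) by (field; lra).
    apply Rcomplements.Rle_div_l; unfold m in *; lra. }
  assert (Hlnw : ln w = 2 * ln t - ln m).
  { unfold w. rewrite ln_div by nra.
    replace (t ^ 2) with (t * t) by ring. rewrite ln_mult; lra. }
  replace (4 * l * ln t + 4 * l - 2 * l * ln m - 4 * l ^ 2 * t ^ 2 / m)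
    with (2 * l * (ln w + 2 - 2 * l * w)) by (rewrite Hlnw; unfold w; field; lra).
  apply Lb_le_curvature; assumption.
Qed.

Lemma Lb_mul_le_gjs_kernel l r : 0 < l < 1 -> 1 <= r ->
  Lb l * ((r - 1) ^ 2 / 2) <= gjs_kernel l r.
Proof.
  intros Hl Hr.
  set (d := fun t => 4 * l * t * ln t - 2 * l * t * ln (l * t ^ 2 + 1 - l) - Lb l * (t - 1)).
  assert (Hd : forall t, 1 <= t -> 0 <= d t).
  { intros t Ht.
    replace 0 with (d 1)
      by (unfold d; replace (l * 1 ^ 2 + 1 - l) with 1 by ring; rewrite ln_1; ring).
    apply (nondecreasing_of_deriv_nonneg d (fun t => 4 * l * ln t + 4 * l
             - 2 * l * ln (l * t ^ 2 + 1 - l) - 4 * l ^ 2 * t ^ 2 / (l * t ^ 2 + 1 - l)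
             - Lb l)); [assumption| |].
    - intros c Hc. apply is_derive_Reals. unfold d. auto_derive.
      + repeat split; try lra. nra.
      + assert (0 < l * c ^ 2 + 1 - l) by nra.
        replace (l * (c * (c * 1)) + 1 + - l) with (l * c ^ 2 + 1 - l) by ring.
        field. lra.
    - intros c Hc. generalize (Lb_le_gjs_kernel_second_deriv l c Hl ltac:(lra)). lra. }
  set (g := fun t => gjs_kernel l t - Lb l * ((t - 1) ^ 2 / 2)).
  enough (g 1 <= g r) by (unfold g in *; rewrite gjs_kernel_1 in *; lra).
  apply (nondecreasing_of_deriv_nonneg g d); [assumption| |].
  - intros c Hc. unfold g, d.
    replace (Lb l * (c - 1)) with (Lb l * (2 * (c - 1) / 2)) by field.
    apply derivable_pt_lim_minus; [apply gjs_kernel_derive; lra|].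
    apply derivable_pt_lim_scal. apply is_derive_Reals. auto_derive; [exact I | field].
  - intros c Hc. apply Hd; lra.
Qed.

Section UpperBound.

Variables l U : R.
Hypothesis Hl : 0 < l <= 1/2.
Hypothesis HU : U * (1 - 2 * l) = 2 * l * (1 - l) * ln ((1 - l) / l).
Hypothesis HU4 : 4 * l * (1 - l) <= U.

(* [gap' = t * phi] and [phi' = q / (t^2 m)]: the sign of [phi'] is that of the convex
   quadratic [q], while [gap] and [phi] both vanish at [1] and at [r0]. *)
Let m t := l * t ^ 2 + 1 - l.
Let gap t := U * ((t - 1) ^ 2 / 2) - gjs_kernel l t.
Let gap' t := U * (t - 1) - (4 * l * t * ln t - 2 * l * t * ln (m t)).
Let phi t := U * (1 - / t) - 4 * l * ln t + 2 * l * ln (m t).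
Let phi' t := U / t ^ 2 - 4 * l / t + 4 * l ^ 2 * t / m t.
Let q t := U * l * t ^ 2 - 4 * l * (1 - l) * t + U * (1 - l).
Let r0 := (1 - l) / l.

Lemma m_pos t : 0 < m t.
Proof. unfold m. nra. Qed.

Lemma gap_derive t : 0 < t -> derivable_pt_lim gap t (gap' t).
Proof.
  intro Ht. unfold gap, gap', m.
  replace (U * (t - 1)) with (U * (2 * (t - 1) / 2)) by field.
  apply derivable_pt_lim_minus; [|apply gjs_kernel_derive; lra].
  apply derivable_pt_lim_scal. apply is_derive_Reals. auto_derive; [exact I | field].
Qed.

Lemma phi_derive t : 0 < t -> derivable_pt_lim phi t (phi' t).
Proof.
  intro Ht. generalize (m_pos t). unfold phi, phi', m. intro Hm.
  apply is_derive_Reals. auto_derive.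
  - repeat split; lra.
  - replace (l * (t * (t * 1)) + 1 + - l) with (l * t ^ 2 + 1 - l) by ring. field. lra.
Qed.

Lemma gap'_eq t : 0 < t -> gap' t = t * phi t.
Proof. intro Ht. unfold gap', phi. field. lra. Qed.

Lemma q_eq t : 0 < t -> q t = phi' t * (t ^ 2 * m t).
Proof. intro Ht. generalize (m_pos t). unfold q, phi', m. intro Hm. field. lra. Qed.

Lemma phi'_nonneg t : 0 < t -> 0 <= q t -> 0 <= phi' t.
Proof.
  intros Ht Hq. rewrite q_eq in Hq by lra.
  assert (0 < t ^ 2 * m t) by (apply Rmult_lt_0_compat; [nra | apply m_pos]). nra.
Qed.

Lemma q_neg t : 0 < t -> phi' t < 0 -> q t < 0.
Proof.
  intros Ht Hphi. rewrite q_eq by lra.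
  assert (0 < t ^ 2 * m t) by (apply Rmult_lt_0_compat; [nra | apply m_pos]). nra.
Qed.

Lemma q_pos t : 0 < t -> 0 < phi' t -> 0 < q t.
Proof.
  intros Ht Hphi. rewrite q_eq by lra.
  assert (0 < t ^ 2 * m t) by (apply Rmult_lt_0_compat; [nra | apply m_pos]). nra.
Qed.

Lemma q_convex p1 p2 p3 : p1 < p2 < p3 ->
  q p2 * (p3 - p1) <= (p3 - p2) * q p1 + (p2 - p1) * q p3.
Proof.
  intro Hp.
  assert (Hid : q p2 * (p3 - p1)
                = (p3 - p2) * q p1 + (p2 - p1) * q p3 - U * l * ((p2 - p1) * (p3 - p2) * (p3 - p1)))
    by (unfold q; ring).
  assert (0 <= U * l) by nra.
  assert (0 < (p2 - p1) * (p3 - p2) * (p3 - p1))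
    by (apply Rmult_lt_0_compat; [apply Rmult_lt_0_compat|]; lra).
  nra.
Qed.

Lemma gap_1 : gap 1 = 0.
Proof. unfold gap. rewrite gjs_kernel_1. field. Qed.

Lemma phi_1 : phi 1 = 0.
Proof. unfold phi, m. replace (l * 1 ^ 2 + 1 - l) with 1 by ring. rewrite ln_1. field. Qed.

Lemma r0_ge_1 : 1 <= r0.
Proof. unfold r0. apply Rcomplements.Rle_div_r; lra. Qed.

Lemma m_r0 : m r0 = r0.
Proof. unfold m, r0. field. lra. Qed.

Lemma phi_r0 : phi r0 = 0.
Proof.
  unfold phi. rewrite m_r0.
  replace (U * (1 - / r0)) with (U * (1 - 2 * l) / (1 - l)) by (unfold r0; field; lra).
  rewrite HU. fold r0. field. lra.
Qed.

Lemma gap_r0 : gap r0 = 0.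
Proof.
  unfold gap, gjs_kernel. fold (m r0). rewrite m_r0.
  replace (U * ((r0 - 1) ^ 2 / 2)) with (U * (1 - 2 * l) * ((1 - 2 * l) / (2 * l ^ 2)))
    by (unfold r0; field; lra).
  rewrite HU. fold r0. unfold r0. field. lra.
Qed.

Lemma q_nonneg_le_1 t : 0 < t <= 1 -> 0 <= q t.
Proof.
  intro Ht. unfold q.
  assert (0 <= U * ((1 - t) * ((1 - l) - l * t))).
  { apply Rmult_le_pos; [nra|]. apply Rmult_le_pos; nra. }
  nra.
Qed.

Lemma q_nonneg_ge_r0 t : r0 <= t -> 0 <= q t.
Proof.
  intro Ht. generalize r0_ge_1. intro Hr0.
  assert (Hlr : l * r0 = 1 - l) by (unfold r0; field; lra).
  assert (Hq0 : 0 <= q r0).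
  { replace (q r0) with ((1 - l) / l * (U - 4 * l * (1 - l))) by (unfold q, r0; field; lra).
    apply Rmult_le_pos; [apply Rdiv_le_0_compat|]; lra. }
  assert (0 <= (t - r0) * (U * l * (t + r0) - 4 * l * (1 - l))).
  { apply Rmult_le_pos; [lra|].
    assert (0 <= U * l * (t - r0)) by (apply Rmult_le_pos; [nra | lra]).
    assert (U * l * (t + r0) = U * l * (t - r0) + 2 * U * (l * r0)) by ring.
    rewrite Hlr in *. nra. }
  assert (q t - q r0 = (t - r0) * (U * l * (t + r0) - 4 * l * (1 - l))) by (unfold q; ring).
  lra.
Qed.

Lemma phi_nonpos_le_1 t : 0 < t <= 1 -> phi t <= 0.
Proof.
  intro Ht. rewrite <- phi_1.
  apply (nondecreasing_of_deriv_nonneg phi phi'); [lra| |].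
  - intros c Hc. apply phi_derive; lra.
  - intros c Hc. apply phi'_nonneg; [lra|]. apply q_nonneg_le_1; lra.
Qed.

Lemma phi_nonneg_ge_r0 t : r0 <= t -> 0 <= phi t.
Proof.
  intro Ht. generalize r0_ge_1. intro Hr0. rewrite <- phi_r0.
  apply (nondecreasing_of_deriv_nonneg phi phi'); [lra| |].
  - intros c Hc. apply phi_derive; lra.
  - intros c Hc. apply phi'_nonneg; [lra|]. apply q_nonneg_ge_r0; lra.
Qed.

Lemma gap_nonneg_le_1 t : 0 < t <= 1 -> 0 <= gap t.
Proof.
  intro Ht. rewrite <- gap_1.
  apply (nonincreasing_of_deriv_nonpos gap gap'); [lra| |].
  - intros c Hc. apply gap_derive; lra.
  - intros c Hc. rewrite gap'_eq by lra.
    generalize (phi_nonpos_le_1 c ltac:(lra)). nra.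
Qed.

Lemma gap_nonneg_ge_r0 t : r0 <= t -> 0 <= gap t.
Proof.
  intro Ht. generalize r0_ge_1. intro Hr0. rewrite <- gap_r0.
  apply (nondecreasing_of_deriv_nonneg gap gap'); [lra| |].
  - intros c Hc. apply gap_derive; lra.
  - intros c Hc. rewrite gap'_eq by lra.
    generalize (phi_nonneg_ge_r0 c ltac:(lra)). nra.
Qed.

(* A negative value of [gap] on [(1, r0)] would force [phi'], hence [q], to change sign
   as [-, +, -], which the convexity of [q] forbids. *)
Lemma gap_nonneg_between t : 1 < t < r0 -> 0 <= gap t.
Proof.
  intro Ht. destruct (Rle_lt_dec 0 (gap t)) as [|Hneg]; [assumption | exfalso].
  assert (Hgap : forall c, 1 <= c <= r0 -> derivable_pt_lim gap c (gap' c))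
    by (intros c Hc; apply gap_derive; lra).
  assert (Hphi : forall c, 1 <= c <= r0 -> derivable_pt_lim phi c (phi' c))
    by (intros c Hc; apply phi_derive; lra).
  destruct (MVT_deriv_neg gap gap' 1 t) as [x1 [Hx1 Hd1]];
    [lra | intros c Hc; apply Hgap; lra | rewrite gap_1; lra |].
  destruct (MVT_deriv_pos gap gap' t r0) as [x2 [Hx2 Hd2]];
    [lra | intros c Hc; apply Hgap; lra | rewrite gap_r0; lra |].
  rewrite gap'_eq in Hd1, Hd2 by lra.
  assert (Hphi1 : phi x1 < 0) by nra.
  assert (Hphi2 : 0 < phi x2) by nra.
  destruct (MVT_deriv_neg phi phi' 1 x1) as [p1 [Hp1 Hq1]];
    [lra | intros c Hc; apply Hphi; lra | rewrite phi_1; lra |].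
  destruct (MVT_deriv_pos phi phi' x1 x2) as [p2 [Hp2 Hq2]];
    [lra | intros c Hc; apply Hphi; lra | lra |].
  destruct (MVT_deriv_neg phi phi' x2 r0) as [p3 [Hp3 Hq3]];
    [lra | intros c Hc; apply Hphi; lra | rewrite phi_r0; lra |].
  apply q_neg in Hq1; apply q_pos in Hq2; apply q_neg in Hq3; try lra.
  generalize (q_convex p1 p2 p3 ltac:(lra)).
  assert (0 < q p2 * (p3 - p1)) by (apply Rmult_lt_0_compat; lra).
  assert ((p3 - p2) * q p1 < 0) by (apply Rmult_pos_neg; lra).
  assert ((p2 - p1) * q p3 < 0) by (apply Rmult_pos_neg; lra).
  lra.
Qed.

Lemma gjs_kernel_le_mul t : 0 < t -> gjs_kernel l t <= U * ((t - 1) ^ 2 / 2).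
Proof.
  intro Ht. enough (0 <= gap t) by (unfold gap in *; lra).
  destruct (Rle_dec t 1); [apply gap_nonneg_le_1; lra|].
  destruct (Rle_dec r0 t); [apply gap_nonneg_ge_r0; lra|].
  apply gap_nonneg_between; lra.
Qed.

End UpperBound.

Definition kl_term (x m : R) : R := if Rlt_dec 0 x then x * ln (x / m) else 0.

Definition gjs_term (l x y : R) : R :=
  l * kl_term x (l * x + (1 - l) * y) + (1 - l) * kl_term y (l * x + (1 - l) * y).

Definition hellinger_term (x y : R) : R := 1/2 * (sqrt x - sqrt y) ^ 2.

Lemma gjs_term_swap l x y : gjs_term l x y = gjs_term (1 - l) y x.
Proof.
  unfold gjs_term. replace ((1 - l) * y + (1 - (1 - l)) * x) with (l * x + (1 - l) * y) by ring.
  replace (1 - (1 - l)) with l by ring. ring.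
Qed.

Lemma hellinger_term_swap x y : hellinger_term x y = hellinger_term y x.
Proof. unfold hellinger_term. ring. Qed.

Lemma gjs_term_0_r l x : 0 < l < 1 -> 0 <= x -> gjs_term l x 0 = eta l * x.
Proof.
  intros Hl Hx. unfold gjs_term, kl_term, eta.
  destruct (Rlt_dec 0 0); [lra|]. destruct (Rlt_dec 0 x).
  - replace (x / (l * x + (1 - l) * 0)) with (/ l) by (field; lra).
    rewrite ln_Rinv by lra. ring.
  - replace x with 0 by lra. ring.
Qed.

Lemma hellinger_term_0_r x : 0 <= x -> hellinger_term x 0 = x / 2.
Proof.
  intro Hx. unfold hellinger_term. rewrite sqrt_0.
  replace ((sqrt x - 0) ^ 2) with (sqrt x * sqrt x) by ring. rewrite sqrt_sqrt; lra.
Qed.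

Lemma gjs_term_kernel l x y : 0 < l < 1 -> 0 < x -> 0 < y ->
  gjs_term l x y = y * gjs_kernel l (sqrt x / sqrt y).
Proof.
  intros Hl Hx Hy. unfold gjs_term, kl_term, gjs_kernel.
  destruct (Rlt_dec 0 x) as [_|]; [|lra]. destruct (Rlt_dec 0 y) as [_|]; [|lra].
  assert (Ha : 0 < sqrt x) by (apply sqrt_lt_R0; lra).
  assert (Hb : 0 < sqrt y) by (apply sqrt_lt_R0; lra).
  set (t := sqrt x / sqrt y).
  assert (Ht : 0 < t) by (unfold t; apply Rdiv_lt_0_compat; lra).
  assert (Exy : x = y * (t * t)).
  { unfold t. rewrite <- (sqrt_sqrt x) at 1 by lra. rewrite <- (sqrt_sqrt y) at 1 by lra.
    field. lra. }
  set (m := l * t ^ 2 + 1 - l).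
  assert (Hm : 0 < m) by (unfold m; nra).
  replace (l * x + (1 - l) * y) with (y * m) by (rewrite Exy; unfold m; ring).
  replace (x / (y * m)) with (t * t / m) by (rewrite Exy; field; lra).
  replace (y / (y * m)) with (/ m) by (field; lra).
  rewrite ln_Rinv, ln_div, ln_mult by nra.
  rewrite Exy. unfold m. ring.
Qed.

Lemma hellinger_term_kernel x y : 0 < y ->
  hellinger_term x y = y * ((sqrt x / sqrt y - 1) ^ 2 / 2).
Proof.
  intro Hy. assert (0 < sqrt y) by (apply sqrt_lt_R0; lra).
  unfold hellinger_term. rewrite <- (sqrt_sqrt y) at 2 by lra. field. lra.
Qed.

Lemma Lb_mul_hellinger_term_le_ordered l x y : 0 < l < 1 -> 0 <= y <= x ->
  Lb l * hellinger_term x y <= gjs_term l x y.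
Proof.
  intros Hl Hxy. destruct (Req_dec y 0) as [->|Hy].
  { rewrite gjs_term_0_r, hellinger_term_0_r by lra. generalize (Lb_le_eta l). nra. }
  rewrite gjs_term_kernel, hellinger_term_kernel by lra.
  assert (0 < sqrt y) by (apply sqrt_lt_R0; lra).
  assert (1 <= sqrt x / sqrt y).
  { apply Rcomplements.Rle_div_r; [lra|]. rewrite Rmult_1_l. apply sqrt_le_1; lra. }
  generalize (Lb_mul_le_gjs_kernel l (sqrt x / sqrt y) Hl ltac:(lra)). nra.
Qed.

Lemma Lb_mul_hellinger_term_le l x y : 0 < l < 1 -> 0 <= x -> 0 <= y ->
  Lb l * hellinger_term x y <= gjs_term l x y.
Proof.
  intros Hl Hx Hy. destruct (Rle_dec y x).
  - apply Lb_mul_hellinger_term_le_ordered; lra.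
  - rewrite gjs_term_swap, hellinger_term_swap, <- Lb_1_sub.
    apply Lb_mul_hellinger_term_le_ordered; lra.
Qed.

Lemma gjs_term_le_Ub_mul_half l x y : 0 < l <= 1/2 -> 0 <= x -> 0 <= y ->
  gjs_term l x y <= Ub l * hellinger_term x y.
Proof.
  intros Hl Hx Hy. destruct (Req_dec y 0) as [->|Hy0].
  { rewrite gjs_term_0_r, hellinger_term_0_r by lra. generalize (eta_le_Ub l ltac:(lra)). nra. }
  destruct (Req_dec x 0) as [->|Hx0].
  { rewrite gjs_term_swap, hellinger_term_swap, gjs_term_0_r, hellinger_term_0_r by lra.
    rewrite <- (Ub_1_sub l) by lra. generalize (eta_le_Ub (1 - l) ltac:(lra)). nra. }
  rewrite gjs_term_kernel, hellinger_term_kernel by lra.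
  assert (0 < sqrt x / sqrt y) by (apply Rdiv_lt_0_compat; apply sqrt_lt_R0; lra).
  generalize (gjs_kernel_le_mul l (Ub l) Hl (Ub_mul_1_sub_2 l ltac:(lra))
                (Ub_ge_4_mul l ltac:(lra)) (sqrt x / sqrt y) ltac:(assumption)).
  nra.
Qed.

Lemma gjs_term_le_Ub_mul l x y : 0 < l < 1 -> 0 <= x -> 0 <= y ->
  gjs_term l x y <= Ub l * hellinger_term x y.
Proof.
  intros Hl Hx Hy. destruct (Rle_dec l (1/2)).
  - apply gjs_term_le_Ub_mul_half; lra.
  - rewrite gjs_term_swap, hellinger_term_swap, <- (Ub_1_sub l) by lra.
    apply gjs_term_le_Ub_mul_half; lra.
Qed.

Lemma sumR_scal n c f : sumR n (fun i => c * f i) = c * sumR n f.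
Proof. unfold sumR. induction (seq 0 n) as [|a s IH]; simpl; [ring | rewrite IH; ring]. Qed.

Lemma sumR_add n f g : sumR n (fun i => f i + g i) = sumR n f + sumR n g.
Proof. unfold sumR. induction (seq 0 n) as [|a s IH]; simpl; [ring | rewrite IH; ring]. Qed.

Lemma sumR_le n f g : (forall i, (i < n)%nat -> f i <= g i) -> sumR n f <= sumR n g.
Proof.
  unfold sumR. intro Hfg.
  assert (Hs : forall i, In i (seq 0 n) -> f i <= g i)
    by (intros i Hi; apply Hfg; apply in_seq in Hi; lia).
  clear Hfg. induction (seq 0 n) as [|a s IH]; simpl in *; [lra|].
  apply Rplus_le_compat; auto.
Qed.

Lemma sumR_ge_term n f j : (forall i, (i < n)%nat -> 0 <= f i) -> (j < n)%nat ->
  f j <= sumR n f.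
Proof.
  unfold sumR. intros Hf Hj.
  assert (Hs : forall i, In i (seq 0 n) -> 0 <= f i)
    by (intros i Hi; apply Hf; apply in_seq in Hi; lia).
  assert (Hjs : In j (seq 0 n)) by (apply in_seq; lia).
  clear Hf Hj. induction (seq 0 n) as [|a s IH]; simpl in *; [contradiction|].
  assert (0 <= fold_right Rplus 0 (map f s)).
  { clear IH Hjs. induction s as [|b s IHs]; simpl in *; [lra|].
    generalize (Hs b (or_intror (or_introl eq_refl))).
    assert (0 <= fold_right Rplus 0 (map f s)) by (apply IHs; intuition).
    lra. }
  destruct Hjs as [<-|Hjs]; [lra|].
  generalize (Hs a (or_introl eq_refl)) (IH (fun i Hi => Hs i (or_intror Hi)) Hjs). lra.
Qed.

Lemma GJS_eq_sumR n l P Q : GJS n l P Q = sumR n (fun i => gjs_term l (P i) (Q i)).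
Proof. unfold GJS, KL. rewrite <- !sumR_scal, <- sumR_add. reflexivity. Qed.

Lemma Hellinger2_eq_sumR n P Q :
  Hellinger2 n P Q = sumR n (fun i => hellinger_term (P i) (Q i)).
Proof. unfold Hellinger2. rewrite <- sumR_scal. reflexivity. Qed.

Lemma Hellinger2_pos n P Q : (forall i, (i < n)%nat -> 0 <= P i) ->
  (forall i, (i < n)%nat -> 0 <= Q i) -> (exists i, (i < n)%nat /\ P i <> Q i) ->
  0 < Hellinger2 n P Q.
Proof.
  intros HP HQ [j [Hj Hne]]. rewrite Hellinger2_eq_sumR.
  apply Rlt_le_trans with (hellinger_term (P j) (Q j)).
  - unfold hellinger_term.
    assert (sqrt (P j) <> sqrt (Q j)) by (intro E; apply Hne, sqrt_inj; auto).
    assert (0 < (sqrt (P j) - sqrt (Q j)) ^ 2) by (apply pow2_gt_0; lra).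
    lra.
  - apply (sumR_ge_term n (fun i => hellinger_term (P i) (Q i))); [|exact Hj].
    intros i _. unfold hellinger_term. generalize (pow2_ge_0 (sqrt (P i) - sqrt (Q i))). lra.
Qed.

Lemma GJS_bounds n P Q l : 0 < l < 1 ->
  (forall i, (i < n)%nat -> 0 <= P i) -> (forall i, (i < n)%nat -> 0 <= Q i) ->
  Lb l * Hellinger2 n P Q <= GJS n l P Q <= Ub l * Hellinger2 n P Q.
Proof.
  intros Hl HP HQ. rewrite GJS_eq_sumR, Hellinger2_eq_sumR, <- !sumR_scal.
  split; apply sumR_le; intros i Hi.
  - apply Lb_mul_hellinger_term_le; auto.
  - apply gjs_term_le_Ub_mul; auto.
Qed.

Theorem theorem1 (n : nat) (P Q : nat -> R)
  (hP : is_distribution n P) (hQ : is_distribution n Q)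
  (hPQ : exists i, (i < n)%nat /\ P i <> Q i) :
  (forall lam : R, 0 < lam < 1 ->
     Lb lam * Hellinger2 n P Q <= GJS n lam P Q /\
     GJS n lam P Q <= Ub lam * Hellinger2 n P Q /\
     Ub lam * Hellinger2 n P Q <= Hellinger2 n P Q) /\
  (ln 2 <= JS n P Q / Hellinger2 n P Q /\ JS n P Q / Hellinger2 n P Q <= 1).
Proof.
  destruct hP as [HP _], hQ as [HQ _].
  assert (HH : 0 < Hellinger2 n P Q) by (apply Hellinger2_pos; assumption).
  split.
  - intros l Hl. destruct (GJS_bounds n P Q l Hl HP HQ) as [Hlow Hup].
    repeat split; [exact Hlow | exact Hup |].
    generalize (Ub_le_1 l Hl). nra.
  - destruct (GJS_bounds n P Q (1/2) ltac:(lra) HP HQ) as [Hlow Hup].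
    rewrite Lb_half in Hlow. rewrite Ub_half in Hup. unfold JS.
    split; [apply Rcomplements.Rle_div_r | apply Rcomplements.Rle_div_l]; lra.
Qed.
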